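(* Let $1\le\ell\le r$ and let $\mathscr I=[I_0,I_1,\dots,I_\ell]$ be an ideal of $\Omega_{H_\ell}$ with $I_0=p\mathbb{Z}$. Then for each $1\le i\le\ell$: (1) $I_i=S(I_{i-1})$ or $I_i=L(I_{i-1})$; and (2) $I_i=J_{i,0}(p^{k+1})$ for some $0\le k\le i$.
   Context: Fix a prime $p$ and an integer $r\ge0$. For $0\le k\le r$ let $R_k$ be the commutative ring which is free as a $\mathbb{Z}$-module with basis $X_{k,0},\dots,X_{k,k}$ and multiplication $X_{k,i}X_{k,j}=p^{k-\max(i,j)}X_{k,\min(i,j)}$; thus $X_{k,k}=1$, and an integer $n$ is identified with $nX_{k,k}$. For $0\le k\le\ell\le r$ define: the additive map $\mathrm{ind}^\ell_k:R_k\to R_\ell$, $X_{k,i}\mapsto X_{\ell,i}$; the ring homomorphism $\mathrm{res}^\ell_k:R_\ell\to R_k$, $\mathrm{res}^\ell_k(X_{\ell,i})=p^{\ell-k}X_{k,i}$ if $i\le k$ and $=p^{\ell-i}$ if $i\ge k$; and the multiplicative map $\mathrm{jnd}^\ell_k:R_k\to R_\ell$, $$\mathrm{jnd}^\ell_k\Big(\sum_{i=0}^k m_iX_{k,i}\Big)=m_kX_{\ell,\ell}+\sum_{k\le i<\ell}\frac{m_k^{p^{\ell-i}}-m_k^{p^{\ell-i-1}}}{p^{\ell-i}}X_{\ell,i}+\sum_{0\le i<k}\frac{(\sum_{s=i}^k m_sp^{k-s})^{p^{\ell-k}}-(\sum_{s=i+1}^k m_sp^{k-s})^{p^{\ell-k}}}{p^{\ell-i}}X_{\ell,i}$$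 ($m_i\in\mathbb{Z}$). An ideal of $\Omega_{H_n}$ is a sequence $[I_0,\dots,I_n]$ of ideals $I_k\subseteq R_k$ such that for every $1\le k\le n$: $\mathrm{ind}^k_{k-1}(I_{k-1})\subseteq I_k$, $\mathrm{res}^k_{k-1}(I_k)\subseteq I_{k-1}$, $\mathrm{jnd}^k_{k-1}(I_{k-1})\subseteq I_k$. For an ideal $I\subseteq R_{i-1}$: $L(I)=(\mathrm{res}^i_{i-1})^{-1}(I)\subseteq R_i$, and $S(I)$ is the ideal of $R_i$ generated by $\mathrm{ind}^i_{i-1}(I)\cup\mathrm{jnd}^i_{i-1}(I)$. For $0\le j\le i$, $F_{i,j}=X_{i,j}-p^{i-j}$; for $x\in\mathbb{Z}$ and $i\ge1$, $J_{i,0}(x)\subseteq R_i$ is the ideal generated by $x,F_{i,0},\dots,F_{i,i-1}$. *)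

From HB Require Import structures.
From mathcomp Require Import all_boot all_order all_algebra.
Set Implicit Arguments. Unset Strict Implicit. Unset Printing Implicit Defensive.
Import Order.TTheory GRing.Theory Num.Theory.
Local Open Scope ring_scope.

(* An element of R_k = sum_{i<=k} m_i X_{k,i} is its coefficient vector. *)
Definition Rk (k : nat) := {ffun 'I_k.+1 -> int}.

Section Defs.
Variable p : nat.

Definition pz (e : nat) : int := (p%:Z) ^+ e.

Definition zeroR k : Rk k := [ffun _ => 0].
Definition addR k (x y : Rk k) : Rk k := [ffun j => x j + y j].

Definition intR k (z : int) : Rk k := [ffun j : 'I_k.+1 => if val j == k then z else 0].

Definition basisX k (j : nat) : Rk k := [ffun t : 'I_k.+1 => if val t == j then 1 else 0].

(* X_{k,i} X_{k,j} = p^{k - max(i,j)} X_{k,min(i,j)}, extended bilinearly *)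
Definition mulR k (x y : Rk k) : Rk k :=
  [ffun m : 'I_k.+1 => \sum_(i < k.+1) \sum_(j < k.+1)
     (if minn i j == val m then x i * y j * pz (k - maxn i j) else 0)].

Definition ind k l (x : Rk k) : Rk l :=
  [ffun j : 'I_l.+1 => if (val j <= k)%N then x (inord j) else 0].

(* res^l_k : X_{l,i} |-> p^{l-k} X_{k,i} (i <= k), p^{l-i} (i >= k), additively *)
Definition res l k (x : Rk l) : Rk k :=
  [ffun j : 'I_k.+1 =>
     if (val j < k)%N then pz (l - k) * x (inord j)
     else \sum_(i < l.+1 | (k <= i)%N) pz (l - i) * x i].

Definition partS k (x : Rk k) (i : nat) : int :=
  \sum_(s < k.+1 | (i <= s)%N) x s * pz (k - s).

(* jnd^l_k, the multiplicative map (the divisions are exact) *)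
Definition jnd k l (x : Rk k) : Rk l :=
  [ffun i : 'I_l.+1 =>
     if val i == l then x ord_max
     else if (k <= i)%N then
       ((x ord_max ^+ (p ^ (l - i)) - x ord_max ^+ (p ^ (l - i - 1))) %/ pz (l - i))%Z
     else
       ((partS x i ^+ (p ^ (l - k)) - partS x i.+1 ^+ (p ^ (l - k))) %/ pz (l - i))%Z].

Definition is_ideal k (I : Rk k -> Prop) : Prop :=
  I (zeroR k) /\ (forall x y, I x -> I y -> I (addR x y)) /\
  (forall a x, I x -> I (mulR a x)).

Definition gen k (G : Rk k -> Prop) : Rk k -> Prop :=
  fun x => forall J, is_ideal J -> (forall y, G y -> J y) -> J x.

Definition is_omega_ideal (n : nat) (I : forall k, Rk k -> Prop) : Prop :=
  (forall k, (k <= n)%N -> is_ideal (I k)) /\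
  (forall k, (k < n)%N ->
     (forall x, I k x -> I k.+1 (ind k.+1 x)) /\
     (forall x, I k.+1 x -> I k (res k x)) /\
     (forall x, I k x -> I k.+1 (jnd k.+1 x))).

Definition Lid i (I : Rk i -> Prop) : Rk i.+1 -> Prop :=
  fun y => I (res i y).
Definition Sid i (I : Rk i -> Prop) : Rk i.+1 -> Prop :=
  gen (fun y => exists x, I x /\ (y = ind i.+1 x \/ y = jnd i.+1 x)).

Definition Fij i (j : nat) : Rk i := addR (basisX i j) (intR i (- pz (i - j))).

Definition J0 i (z : int) : Rk i -> Prop :=
  gen (fun y => y = intR i z \/ exists j : nat, (j < i)%N /\ y = Fij i j).

End Defs.

(* The proof rests on the augmentation aug : R_k -> Z, X_{k,s} |-> p^{k-s}, a ring
   homomorphism that kills every F_{k,j}, commutes with res, and satisfies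
   x = aug x + sum_j m_j F_{k,j}.  Consequently an ideal containing all F_{k,j} is
   determined by the integers it contains, and J_{k,0}(z) = aug^-1(zZ). *)

From HB Require Import structures.
From mathcomp Require Import all_boot all_order all_algebra.
From mathcomp Require Import zify ring.
From Stdlib Require Import Classical.
Import Order.TTheory GRing.Theory Num.Theory.
Set Implicit Arguments. Unset Strict Implicit. Unset Printing Implicit Defensive.
Local Open Scope ring_scope.

Section IdealBasics.
Variable p : nat.

(* Integer multiples c x in R_k; [mulR_intR] shows this is multiplication by the
   constant c X_{k,k}, so ideals are closed under it. *)
Definition scaleR k (c : int) (x : Rk k) : Rk k := [ffun j => c * x j].

Lemma mulR_intR k (c : int) (x : Rk k) : mulR p (intR k c) x = scaleR c x.
Proof.
apply/ffunP=> m; rewrite !ffunE (bigD1 ord_max) //= [X in _ + X]big1 => [|i i_neq].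
  have le_k (j : 'I_k.+1) : (j <= k)%N by rewrite -ltnS.
  rewrite addr0 (bigD1 m) //= big1 => [|j j_neq].
    rewrite ffunE eqxx (minn_idPr (le_k m)) (maxn_idPl (le_k m)).
    by rewrite eqxx subnn /pz expr0 addr0 mulr1.
  by rewrite ffunE eqxx (minn_idPr (le_k j)) (negbTE (_ : val j != val m)).
have i_lt : (val i == k) = false.
  by apply: contraNF i_neq => /eqP i_top; apply/eqP; apply: val_inj.
by rewrite big1 // => j _; rewrite ffunE i_lt !mul0r if_same.
Qed.

Lemma scale_intR k c z : scaleR c (intR k z) = intR k (c * z).
Proof. by apply/ffunP=> j; rewrite !ffunE; case: ifP; rewrite ?mulr0. Qed.

Lemma add_intR k m n : addR (intR k m) (intR k n) = intR k (m + n).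
Proof. by apply/ffunP=> j; rewrite !ffunE; case: ifP; rewrite ?addr0. Qed.

Lemma ideal_add k (J : Rk k -> Prop) x y :
  is_ideal p J -> J x -> J y -> J (addR x y).
Proof. by move=> [_ [addJ _]]; apply: addJ. Qed.

Lemma ideal_scale k (J : Rk k -> Prop) c x : is_ideal p J -> J x -> J (scaleR c x).
Proof. by move=> [_ [_ mulJ]] Jx; rewrite -mulR_intR; apply: mulJ. Qed.

Lemma ideal_sum k (J : Rk k -> Prop) n (c : 'I_n -> int) (f : 'I_n -> Rk k) :
  is_ideal p J -> (forall j, J (f j)) -> J [ffun t => \sum_(j < n) c j * f j t].
Proof.
move=> idJ; elim: n c f => [|n IHn] c f Jf.
  have -> : [ffun t => \sum_(j < 0) c j * f j t] = zeroR k.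
    by apply/ffunP=> t; rewrite !ffunE big_ord0.
  by case: idJ.
have -> : [ffun t => \sum_(j < n.+1) c j * f j t] =
    addR [ffun t => \sum_(j < n) c (widen_ord (leqnSn n) j) * f (widen_ord (leqnSn n) j) t]
         (scaleR (c ord_max) (f ord_max)).
  by apply/ffunP=> t; rewrite !ffunE big_ord_recr.
by apply: ideal_add => //; [apply: IHn | apply: ideal_scale].
Qed.

Lemma gen_ideal k (G : Rk k -> Prop) : is_ideal p (gen p G).
Proof.
split; first by move=> J [].
split; first by move=> x y Gx Gy J idJ GJ; apply: ideal_add; [|apply: Gx|apply: Gy].
by move=> a x Gx J idJ GJ; case: (idJ) => [_ [_ mulJ]]; apply: mulJ; apply: Gx.
Qed.

Lemma gen_incl k (G : Rk k -> Prop) x : G x -> gen p G x.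
Proof. by move=> Gx J _; apply. Qed.

Lemma gen_min k (G J : Rk k -> Prop) x :
  is_ideal p J -> (forall y, G y -> J y) -> gen p G x -> J x.
Proof. by move=> idJ GJ; apply. Qed.

End IdealBasics.

Section Augmentation.
Variable p : nat.

Definition aug k (x : Rk k) : int := \sum_(s < k.+1) x s * pz p (k - s).

Lemma aug_add k (x y : Rk k) : aug (addR x y) = aug x + aug y.
Proof. by rewrite /aug -big_split; apply: eq_bigr => s _; rewrite ffunE mulrDl. Qed.

Lemma aug_mul k (x y : Rk k) : aug (mulR p x y) = aug x * aug y.
Proof.
rewrite /aug mulr_suml.
under eq_bigr => m _ do rewrite ffunE mulr_suml.
under eq_bigr => m _ do under eq_bigr => i _ do rewrite mulr_suml.
rewrite exchange_big /=; apply: eq_bigr => i _.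
rewrite exchange_big /= mulr_sumr; apply: eq_bigr => j _.
have min_lt : (minn i j < k.+1)%N by rewrite (leq_ltn_trans (geq_minl i j)).
rewrite (bigD1 (Ordinal min_lt)) //= eqxx big1 ?addr0; last first.
  move=> m /negbTE m_neq; case: eqP => [min_eq|]; last by rewrite mul0r.
  by move: m_neq; rewrite (_ : m = Ordinal min_lt) ?eqxx //; apply: val_inj.
(* (k - max i j) + (k - min i j) = (k - i) + (k - j) *)
rewrite /pz -mulrA -exprD mulrACA -exprD; congr (_ * _ ^+ _); lia.
Qed.

Lemma aug_intR k z : aug (intR k z) = z.
Proof.
rewrite /aug (bigD1 ord_max) //= big1 => [|s s_neq].
  by rewrite ffunE eqxx subnn /pz expr0 mulr1 addr0.
have s_lt : (val s == k) = false.
  by apply: contraNF s_neq => /eqP s_top; apply/eqP; apply: val_inj.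
by rewrite ffunE s_lt mul0r.
Qed.

Lemma aug_basisX k j : (j <= k)%N -> aug (basisX k j) = pz p (k - j).
Proof.
rewrite -ltnS => j_lt; rewrite /aug (bigD1 (Ordinal j_lt)) //= big1 => [|s s_neq].
  by rewrite ffunE eqxx mul1r addr0.
have s_ne : (val s == j) = false.
  by apply: contraNF s_neq => /eqP s_j; apply/eqP; apply: val_inj.
by rewrite ffunE s_ne mul0r.
Qed.

Lemma aug_R0 (x : Rk 0) : aug x = x ord0.
Proof. by rewrite /aug big_ord1 subnn /pz expr0 mulr1. Qed.

Lemma aug_F k j : (j <= k)%N -> aug (Fij p k j) = 0.
Proof. by move=> j_le; rewrite aug_add aug_basisX // aug_intR subrr. Qed.

(* aug is compatible with restriction: this is what makes L(aug^-1(zZ)) = aug^-1(zZ). *)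
Lemma aug_res k (y : Rk k.+1) : aug (res p k y) = aug y.
Proof.
rewrite /aug big_ord_recr /= ffunE /= ltnn subnn /pz expr0 mulr1.
rewrite [RHS]big_ord_recr [in RHS]big_ord_recr /= subnn subSnn expr0 expr1 mulr1.
rewrite -addrA; congr (_ + _).
  apply: eq_bigr => j _; rewrite ffunE /= ltn_ord subSnn /pz expr1.
  rewrite (subSn (ltnW (ltn_ord j))) exprS.
  have -> : (inord j : 'I_k.+2) = widen_ord (leqnSn k.+1) (widen_ord (leqnSn k) j).
    by apply: val_inj; rewrite /= inordK // (ltn_trans (ltn_ord j)) // ltnW.
  by rewrite mulrCA mulrA.
rewrite big_mkcond !big_ord_recr /= big1 => [|i _]; last by rewrite leqNgt ltn_ord.
by rewrite leqnn leqnSn add0r subSnn subnn expr1 expr0 mul1r mulrC.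
Qed.

Definition Fpart k (x : Rk k) : Rk k :=
  [ffun t => \sum_(j < k) x (widen_ord (leqnSn k) j) * Fij p k j t].

Lemma aug_decomposition k (x : Rk k) : x = addR (intR k (aug x)) (Fpart x).
Proof.
have F_val (j : 'I_k) t : Fij p k j t =
    (if val t == j then 1 else 0) + (if val t == k then - pz p (k - j) else 0).
  by rewrite !ffunE.
apply/ffunP=> t; rewrite !ffunE; case: eqP => [t_top|t_ne].
  have -> : \sum_(j < k) x (widen_ord (leqnSn k) j) * Fij p k j t
      = - \sum_(j < k) x (widen_ord (leqnSn k) j) * pz p (k - j).
    rewrite -sumrN; apply: eq_bigr => j _.
    by rewrite F_val t_top eqxx gtn_eqF // add0r mulrN.
  rewrite /aug big_ord_recr /= subnn /pz expr0 mulr1.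
  have -> : t = ord_max by apply: val_inj.
  by rewrite addrAC subrr add0r.
have t_lt : (t < k)%N by rewrite ltn_neqAle (introF eqP t_ne) -ltnS ltn_ord.
rewrite add0r (bigD1 (Ordinal t_lt)) //= big1 => [|j j_neq].
  rewrite (F_val (Ordinal t_lt)) /= eqxx (introF eqP t_ne) mulr1 !addr0.
  by congr (x _); apply: val_inj.
rewrite F_val (introF eqP t_ne) addr0 ifF ?mulr0 //.
by apply: contraNF j_neq => /eqP t_j; apply/eqP; apply: val_inj.
Qed.

Lemma ideal_aug_mem k (J : Rk k -> Prop) x :
  is_ideal p J -> (forall j, (j < k)%N -> J (Fij p k j)) ->
  J x <-> J (intR k (aug x)).
Proof.
move=> idJ JF.
have JFx : J (Fpart x) by apply: (ideal_sum (p := p)) => // j; apply: JF.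
rewrite {1}(aug_decomposition x); split=> [Jx|Jaug]; last exact: ideal_add idJ Jaug JFx.
have -> : intR k (aug x) = addR (addR (intR k (aug x)) (Fpart x)) (scaleR (-1) (Fpart x)).
  by apply/ffunP=> t; rewrite !ffunE mulN1r addrK.
by apply: (ideal_add idJ Jx); apply: ideal_scale idJ JFx.
Qed.

Lemma aug_preimage_ideal k (z : int) : is_ideal p (fun x : Rk k => (z %| aug x)%Z).
Proof.
split; first by rewrite /aug big1 // => s _; rewrite ffunE mul0r.
split=> [x y zx zy|a x zx]; first by rewrite aug_add rpredD.
by rewrite aug_mul dvdz_mull.
Qed.

Lemma aug_preimage_sub k (J : Rk k -> Prop) (z : int) x :
  is_ideal p J -> (forall j, (j < k)%N -> J (Fij p k j)) -> J (intR k z) ->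
  (z %| aug x)%Z -> J x.
Proof.
move=> idJ JF Jz /dvdzP [c aug_x]; apply/(ideal_aug_mem x idJ JF).
by rewrite aug_x -scale_intR; apply: ideal_scale idJ Jz.
Qed.

Lemma J0_aug k (z : int) x : @J0 p k z x <-> (z %| aug x)%Z.
Proof.
split=> [|z_aug].
  apply: (gen_min (aug_preimage_ideal k z)).
  by move=> y [->|[j [j_lt ->]]]; rewrite ?aug_intR ?(aug_F (ltnW j_lt)).
apply: (aug_preimage_sub (gen_ideal _ _) _ _ z_aug) => [j j_lt|]; apply: gen_incl.
  by right; exists j.
by left.
Qed.

Lemma ideal_eq_aug_preimage k (J : Rk k -> Prop) (z : int) :
  is_ideal p J -> (forall j, (j < k)%N -> J (Fij p k j)) -> J (intR k z) ->
  (forall x, J x -> (z %| aug x)%Z) -> forall x, J x <-> (z %| aug x)%Z.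
Proof. by move=> idJ JF Jz J_sub x; split=> [/J_sub|]; last exact: aug_preimage_sub. Qed.

End Augmentation.

Section Sandwich.
Variable p : nat.
Hypothesis p_prime : prime p.

Lemma aug_sandwich k (J : Rk k -> Prop) e :
  is_ideal p J -> (forall j, (j < k)%N -> J (Fij p k j)) ->
  J (intR k (pz p e.+1)) -> (forall x, J x -> (pz p e %| aug p x)%Z) ->
  (forall x, J x <-> (pz p e %| aug p x)%Z) \/ (forall x, J x <-> (pz p e.+1 %| aug p x)%Z).
Proof.
move=> idJ JF Jpe1 J_sub.
have [[y [Jy not_dvd]]|J_sub1] := classic (exists y, J y /\ ~ (pz p e.+1 %| aug p y)%Z).
  left; apply: ideal_eq_aug_preimage => //.
  have /dvdzP [u aug_y] := J_sub y Jy.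
  have /coprimezP [[s t] /= bezout] : coprimez p%:Z u.
    rewrite coprimezE prime_coprime //; apply: contra_notN not_dvd => p_u.
    by rewrite aug_y /pz exprSr mulrC dvdz_mul.
  have Jaug : J (intR k (aug p y)) by apply/(ideal_aug_mem y idJ JF).
  have -> : intR k (pz p e) =
      addR (scaleR s (intR k (pz p e.+1))) (scaleR t (intR k (aug p y))).
    rewrite !scale_intR add_intR aug_y /pz exprSr; congr (intR k _).
    by rewrite -[LHS]mulr1 -bezout; ring.
  by apply: ideal_add idJ (ideal_scale _ idJ Jpe1) (ideal_scale _ idJ Jaug).
right; apply: ideal_eq_aug_preimage => // x Jx.
by apply: NNPP => not_dvd; apply: J_sub1; exists x.
Qed.

End Sandwich.

Section InductionFormulas.
Variable p : nat.

(* Explicit identities expressing F_{i+1,j} and p^{e+2} in R_{i+1} through ind and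
   jnd of elements of R_i; they show that S(I) contains the generators of J_{i+1,0}. *)

Lemma ind_F i j : (j < i)%N ->
  Fij p i.+1 j = addR (ind i.+1 (Fij p i j)) (scaleR (pz p (i - j)) (Fij p i.+1 i)).
Proof.
move=> j_lt; apply/ffunP=> t; rewrite !ffunE.
case: (leqP t i) => t_le.
  rewrite /= inordK ?ltnS // (@ltn_eqF t i.+1 t_le).
  by case: (val t == j); case: (val t == i); ring.
have t_top : val t = i.+1 by apply/eqP; rewrite eqn_leq -ltnS ltn_ord t_le.
have j_lt1 : (j < i.+1)%N by rewrite ltnS ltnW.
rewrite t_top eqxx (gtn_eqF j_lt1) (gtn_eqF (ltnSn i)).
by rewrite /pz subSnn (subSn (ltnW j_lt)) exprS; ring.
Qed.

Lemma ind_intR i (z : int) :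
  intR i.+1 (z * p%:Z) = addR (ind i.+1 (intR i z)) (scaleR (- z) (Fij p i.+1 i)).
Proof.
apply/ffunP=> t; rewrite !ffunE /pz subSnn expr1.
case: (leqP t i) => t_le.
  rewrite /= inordK ?ltnS // (@ltn_eqF t i.+1 t_le).
  by case: (t == i :> nat); ring.
have t_top : val t = i.+1 by apply/eqP; rewrite eqn_leq -ltnS ltn_ord t_le.
by rewrite t_top eqxx (gtn_eqF (ltnSn i)); ring.
Qed.

Lemma partS_add k (x y : Rk k) t : partS p (addR x y) t = partS p x t + partS p y t.
Proof. by rewrite /partS -big_split /=; apply: eq_bigr => s _; rewrite ffunE mulrDl. Qed.

Lemma sum_if_eq n (j : 'I_n) (P : pred 'I_n) (c : int) :
  \sum_(s < n | P s) (if s == j then c else 0) = if P j then c else 0.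
Proof.
rewrite big_mkcond (bigD1 j) //= eqxx big1 ?addr0 // => s s_neq.
by rewrite (negbTE s_neq) if_same.
Qed.

Lemma partS_intR k z t : partS p (intR k z) t = if (t <= k)%N then z else 0.
Proof.
rewrite /partS (eq_bigr (fun s : 'I_k.+1 => if s == ord_max then z else 0)) ?sum_if_eq //.
move=> s _; rewrite ffunE; case: eqP => [s_top|s_ne].
  by rewrite (_ : s = ord_max) ?eqxx /= ?subnn /pz ?expr0 ?mulr1 //; apply: val_inj.
by rewrite mul0r ifF //; apply/eqP=> s_top; rewrite s_top in s_ne.
Qed.

Lemma partS_basisX k j t : (j <= k)%N ->
  partS p (basisX k j) t = if (t <= j)%N then pz p (k - j) else 0.
Proof.
move=> j_le; rewrite /partS.
rewrite (eq_bigr (fun s : 'I_k.+1 => if s == inord j then pz p (k - j) else 0)).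
  by rewrite sum_if_eq inordK.
move=> s _; rewrite ffunE; case: eqP => [s_j|s_ne].
  by rewrite (_ : s = inord j) ?eqxx ?mul1r ?inordK //; apply: val_inj; rewrite /= inordK.
by rewrite mul0r ifF //; apply/eqP=> s_j; rewrite s_j /= inordK in s_ne.
Qed.

Lemma partS_F n t :
  partS p (Fij p n.+1 n) t =
  (if (t <= n)%N then p%:Z else 0) - (if (t <= n.+1)%N then p%:Z else 0).
Proof.
rewrite /Fij partS_add partS_intR partS_basisX // /pz subSnn expr1.
by case: (t <= n)%N; case: (t <= n.+1)%N; rewrite ?subr0 ?addr0 ?oppr0 ?add0r ?sub0r.
Qed.

Hypothesis p_gt1 : (1 < p)%N.

Let p_neq0 : p%:Z != 0. Proof. by rewrite eqz_nat gtn_eqF // ltnW. Qed.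

Let exp_split (a : int) : a ^+ p = a ^+ (p - 2) * a ^+ 2.
Proof. by rewrite -exprD subnK. Qed.

Lemma F10_from_p :
  Fij p 1 0 = addR (scaleR (-1) (jnd p 1 (intR 0 p%:Z)))
                   (scaleR (pz p (p - 2)) (ind 1 (intR 0 p%:Z))).
Proof.
apply/ffunP=> t; rewrite !ffunE; case: t => [[|[|t]] t_lt] //=.
  case: (inord 0 : 'I_1) => [[|//] ?] /=.
  rewrite (subn0 1) subnn expn1 expn0 /pz expr1.
  have -> : (p%:Z) ^+ p - (p%:Z) ^+ 1 = ((p%:Z) ^+ (p - 2) * p - 1) * p.
    by rewrite exp_split; ring.
  by rewrite mulzK //; ring.
by rewrite /pz (subn0 1) expr1 mulr0; ring.
Qed.

(* The integer q = (-p)^p / p^2 appearing in jnd F_{n+1,n}. *)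
Let q : int := (-1) ^+ p * p%:Z ^+ (p - 2).

Let negp_exp : (- p%:Z) ^+ p = p%:Z ^+ 2 * q.
Proof. by rewrite exprNn (exp_split p%:Z) /q; ring. Qed.

Lemma jnd_F_coef n (t : 'I_n.+3) :
  jnd p n.+2 (Fij p n.+1 n) t =
  if val t == n.+2 then - p%:Z
  else if val t == n.+1 then p%:Z * q + 1
  else if val t == n then - q
  else 0.
Proof.
have F_top : Fij p n.+1 n ord_max = - p%:Z.
  by rewrite !ffunE /= (gtn_eqF (ltnSn n)) eqxx /pz subSnn expr1 add0r.
rewrite /jnd ffunE F_top; case: t => m m_lt /=.
have [m_lt_n | m_gt_n | ->] := ltngtP m n.
- have [-> ->] : (m == n.+2) = false /\ (m == n.+1) = false by split; apply/eqP; lia.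
  rewrite !partS_F.
  have [-> -> -> ->] : [/\ (m <= n)%N, (m <= n.+1)%N, (m.+1 <= n)%N & (m.+1 <= n.+1)%N].
    by split; lia.
  by rewrite !subrr div0z.
- case: eqP => [//|m_ne]; have -> : m = n.+1 by lia.
  rewrite eqxx subSnn subnn expn1 expn0 expr1 negp_exp /pz expr1.
  have -> : p%:Z ^+ 2 * q - - p%:Z = (p%:Z * q + 1) * p%:Z by rewrite expr2; ring.
  by rewrite mulzK.
- have [-> ->] : (n == n.+2) = false /\ (n == n.+1) = false by split; apply/eqP; lia.
  rewrite !partS_F leqnn leqnSn ltnn ltnSn subrr !sub0r subSnn expn1 expr0n.
  rewrite (gtn_eqF (ltnW p_gt1)) sub0r negp_exp (_ : (n.+2 - n = 2)%N); last by lia.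
  by rewrite /pz -mulrN mulrC mulzK // expf_neq0.
Qed.

Lemma F_from_jnd_F n :
  Fij p n.+2 n.+1 = addR (jnd p n.+2 (Fij p n.+1 n)) (scaleR q (ind n.+2 (Fij p n.+1 n))).
Proof.
apply/ffunP=> t; rewrite [RHS]ffunE jnd_F_coef ![in RHS]ffunE.
rewrite [LHS]ffunE [basisX _ _ _]ffunE [intR _ _ _]ffunE /pz subSnn expr1.
case: (leqP t n.+1) => t_le.
  rewrite /= inordK ?ltnS // (@ltn_eqF t n.+2 t_le) subSnn expr1.
  case: eqP => [->|_]; first by rewrite (gtn_eqF (ltnSn n)); ring.
  by case: (t == n :> nat); ring.
have t_top : val t = n.+2 by apply/eqP; rewrite eqn_leq -ltnS ltn_ord t_le.
by rewrite t_top !eqxx (gtn_eqF (ltnSn n.+1)); ring.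
Qed.

End InductionFormulas.

Section GeneratorsOfS.
Variable p : nat.

Lemma S_ind i (J : Rk i -> Prop) x : J x -> @Sid p i J (ind i.+1 x).
Proof. by move=> Jx; apply: gen_incl; exists x; split=> //; left. Qed.

Lemma S_jnd i (J : Rk i -> Prop) x : J x -> @Sid p i J (jnd p i.+1 x).
Proof. by move=> Jx; apply: gen_incl; exists x; split=> //; right. Qed.

Hypothesis p_gt1 : (1 < p)%N.

(* If J = aug^-1(p^{e+1}Z) in R_i with e <= i, then F_{i+1,i} lies in S(J):
   for i = 0 this uses p in J, for i > 0 it uses F_{i,i-1} in J. *)
Lemma S_contains_F_top i (J : Rk i -> Prop) e : (e <= i)%N ->
  (forall x, J x <-> (pz p e.+1 %| aug p x)%Z) -> @Sid p i J (Fij p i.+1 i).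
Proof.
have idS (k : nat) (I : Rk k -> Prop) : is_ideal p (@Sid p k I) by apply: gen_ideal.
case: i J => [|n] J e_le J_aug.
  have Jp : J (intR 0 p%:Z).
    by apply/J_aug; move: e_le; rewrite leqn0 => /eqP ->; rewrite aug_intR /pz expr1.
  rewrite (F10_from_p p_gt1).
  exact: ideal_add (idS _ _) (ideal_scale _ (idS _ _) (S_jnd Jp))
                   (ideal_scale _ (idS _ _) (S_ind Jp)).
have JF : J (Fij p n.+1 n) by apply/J_aug; rewrite aug_F.
rewrite (F_from_jnd_F p_gt1).
exact: ideal_add (idS _ _) (S_jnd JF) (ideal_scale _ (idS _ _) (S_ind JF)).
Qed.

Lemma S_contains_generators i (J : Rk i -> Prop) e : (e <= i)%N ->
  (forall x, J x <-> (pz p e.+1 %| aug p x)%Z) ->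
  (forall j, (j < i.+1)%N -> @Sid p i J (Fij p i.+1 j)) /\
  @Sid p i J (intR i.+1 (pz p e.+2)).
Proof.
move=> e_le J_aug; have idS : is_ideal p (@Sid p i J) by apply: gen_ideal.
have S_top := S_contains_F_top e_le J_aug.
split=> [j|].
  rewrite ltnS leq_eqVlt => /orP [/eqP ->|j_lt]; first exact: S_top.
  have JF : J (Fij p i j) by apply/J_aug; rewrite (aug_F p (ltnW j_lt)).
  by rewrite (ind_F p j_lt); apply: ideal_add idS (S_ind JF) (ideal_scale _ idS S_top).
have Jpe : J (intR i (pz p e.+1)) by apply/J_aug; rewrite aug_intR.
rewrite /pz exprSr (ind_intR p i).
exact: ideal_add idS (S_ind Jpe) (ideal_scale _ idS S_top).
Qed.

End GeneratorsOfS.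


(* One step of the induction: if I_i = aug^-1(p^{e+1}Z) with e <= i, then
   S(I_i) <= I_{i+1} <= L(I_i) = aug^-1(p^{e+1}Z), and by the sandwich lemma
   I_{i+1} = L(I_i), or I_{i+1} = aug^-1(p^{e+2}Z) = S(I_i). *)
Lemma omega_ideal_step p l (I : forall k, Rk k -> Prop) i e :
  prime p -> is_omega_ideal p l I -> (i < l)%N -> (e <= i)%N ->
  (forall x, I i x <-> (pz p e.+1 %| aug p x)%Z) ->
  ((forall x, I i.+1 x <-> @Sid p i (I i) x) \/ (forall x, I i.+1 x <-> @Lid p i (I i) x)) /\
  (exists2 e', (e' <= e.+1)%N & forall x, I i.+1 x <-> (pz p e'.+1 %| aug p x)%Z).
Proof.
move=> p_prime [idI closedI] i_lt e_le Ii_aug.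
have idI1 : is_ideal p (I i.+1) by apply: idI.
have [ind_I [res_I jnd_I]] := closedI i i_lt.
have S_le_I y : @Sid p i (I i) y -> I i.+1 y.
  by apply: gen_min => // _ [x [Ix [->|->]]]; [apply: ind_I | apply: jnd_I].
have L_aug y : @Lid p i (I i) y <-> (pz p e.+1 %| aug p y)%Z by rewrite /Lid Ii_aug aug_res.
have [SF Sp] := S_contains_generators (prime_gt1 p_prime) e_le Ii_aug.
have IF j : (j < i.+1)%N -> I i.+1 (Fij p i.+1 j) by move=> j_lt; apply: S_le_I; apply: SF.
have I_le_L y : I i.+1 y -> (pz p e.+1 %| aug p y)%Z by move=> /res_I /L_aug.
have [I_eq_L | I_eq_pe2] := aug_sandwich p_prime idI1 IF (S_le_I _ Sp) I_le_L.
  by split; [right=> x; rewrite I_eq_L L_aug | exists e].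
have S_eq_pe2 : forall x, @Sid p i (I i) x <-> (pz p e.+2 %| aug p x)%Z.
  apply: ideal_eq_aug_preimage SF Sp _ => [|x /S_le_I /I_eq_pe2 //].
  exact: gen_ideal.
by split; [left=> x; rewrite I_eq_pe2 S_eq_pe2 | exists e.+1].
Qed.

Lemma omega_ideal_aug p l (I : forall k, Rk k -> Prop) :
  prime p -> is_omega_ideal p l I ->
  (forall x : Rk 0, I 0%N x <-> (p%:Z %| x ord0)%Z) ->
  forall i, (i <= l)%N ->
    exists2 e, (e <= i)%N & forall x, I i x <-> (pz p e.+1 %| aug p x)%Z.
Proof.
move=> p_prime omegaI I0; elim=> [_|i IHi i_lt].
  by exists 0%N => // x; rewrite I0 aug_R0 /pz expr1.
have [e e_le Ii_aug] := IHi (ltnW i_lt).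
have [_ [e' e'_le Ii1_aug]] := omega_ideal_step p_prime omegaI i_lt e_le Ii_aug.
by exists e' => //; apply: leq_trans e'_le _.
Qed.

Theorem corollary6 (p r l : nat) (I : forall k, Rk k -> Prop) :
  prime p -> (1 <= l <= r)%N ->
  is_omega_ideal p l I ->
  (forall x : Rk 0, I 0%N x <-> (p%:Z %| x ord0)%Z) ->
  forall i : nat, (i < l)%N ->
    ((forall x, I i.+1 x <-> @Sid p i (I i) x) \/ (forall x, I i.+1 x <-> @Lid p i (I i) x)) /\
    (exists k : nat, (k <= i.+1)%N /\
       forall x, I i.+1 x <-> @J0 p i.+1 (pz p k.+1) x).
Proof.
move=> p_prime _ omegaI I0 i i_lt.
have [e e_le Ii_aug] := omega_ideal_aug p_prime omegaI I0 (ltnW i_lt).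
have [S_or_L [e' e'_le Ii1_aug]] := omega_ideal_step p_prime omegaI i_lt e_le Ii_aug.
split=> //; exists e'; split; first exact: leq_trans e'_le _.
by move=> x; rewrite Ii1_aug J0_aug.
Qed.
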